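(* Let $d\geq1$, $C=\mathbb R_{\geq0}^d$, and order $\mathbb R^d$ componentwise ($x\leq y$ iff $y-x\in C$). For $i=1,\ldots,d$ let $\alpha_i\geq0$, $c_i\geq0$, $\beta^i\in\mathbb R^d$, and $\mu_i$ a Borel measure on $C\setminus\{0\}$ such that $\mu_i(\{\xi\in C:|\xi|>1\})<\infty$, $\int_{\xi\in C,\,0<|\xi|\leq1}\big(\sum_{k\neq i}|\xi_k|+|\xi_i|^2\big)\mu_i(d\xi)<\infty$, and $\beta^i_k-\int_{0<|\xi|\leq1}\xi_k\,\mu_i(d\xi)\geq0$ for all $k\neq i$. Define $f=(f_1,\ldots,f_d)$ with values in $(-\infty,+\infty]$ by $$f_i(x)=\frac{\alpha_i}{2}x_i^2+x\cdot\beta^i-c_i+\int_{C\setminus\{0\}}\left(e^{x\cdot\xi}-1-x\cdot\xi\,\mathbf 1_{|\xi|\leq1}\right)\mu_i(d\xi),\qquad x\in\mathbb R^d,$$ and let $U=\{x\in\mathbb R^d: f_i(x)<\infty\text{ for all }i\}$. Then $U$ is convex and order-regular, and $f$ is convex and quasi-monotone increasing on $U$.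
   Context: A map $g\colon D\to\mathbb R^d$ is convex if $D$ is convex and $g(\lambda x+(1-\lambda)y)\leq\lambda g(x)+(1-\lambda)g(y)$ componentwise for $x,y\in D$, $\lambda\in[0,1]$. For the order induced by $\mathbb R^d_{\geq0}$, $g$ is quasi-monotone increasing on $D$ if for all $x,y\in D$ with $x\leq y$ and $x_i=y_i$ one has $g_i(x)\leq g_i(y)$ (equivalently: $x\leq y$, $l(x)=l(y)$ imply $l(g(x))\leq l(g(y))$ for every linear functional $l$ nonnegative on $\mathbb R^d_{\geq0}$). A set $D$ is order-regular if $x\in D$, $y\leq x$ imply $y\in D$. Here $|\cdot|$ is the Euclidean norm and $x\cdot\xi$ the standard inner product. *)

From HB Require Import structures.
From mathcomp Require Import all_boot all_order all_algebra.
From mathcomp Require Import all_classical all_reals all_analysis.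
Set Implicit Arguments. Unset Strict Implicit. Unset Printing Implicit Defensive.
Import Order.TTheory GRing.Theory Num.Theory.
Import numFieldNormedType.Exports.
Local Open Scope classical_set_scope.
Local Open Scope ring_scope.

(* R^d is modelled by row vectors 'rV[R]_d; coordinate k of x is x 0 k. *)

Definition BorelRd (R : realType) (d : nat) :=
  g_sigma_algebraType (@open 'rV[R]_d).

Definition dotv (R : realType) (d : nat) (x y : 'rV[R]_d) : R :=
  \sum_(k < d) x 0 k * y 0 k.
Definition enorm (R : realType) (d : nat) (x : 'rV[R]_d) : R :=
  Num.sqrt (\sum_(k < d) (x 0 k) ^+ 2).

Definition vle (R : realType) (d : nat) (x y : 'rV[R]_d) : Prop :=
  forall k : 'I_d, x 0 k <= y 0 k.

Definition cone (R : realType) (d : nat) : set 'rV[R]_d :=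
  [set xi | forall k : 'I_d, 0 <= xi 0 k].

Definition coneStar (R : realType) (d : nat) : set 'rV[R]_d :=
  [set xi | cone xi /\ xi <> 0].

(* {xi in C : 0 < |xi| <= 1}  (note: inside C\{0}, 0<|xi| is automatic) *)
Definition smallJumps (R : realType) (d : nat) : set 'rV[R]_d :=
  [set xi | coneStar xi /\ enorm xi <= 1].

Definition bigJumps (R : realType) (d : nat) : set 'rV[R]_d :=
  [set xi | cone xi /\ 1 < enorm xi].

Definition fcomp (R : realType) (d : nat) (alpha c : R) (beta : 'rV[R]_d)
  (mu : {measure set (BorelRd R d) -> \bar R}) (i : 'I_d) (x : 'rV[R]_d) : \bar R :=
  ((alpha / 2) * (x 0 i) ^+ 2 + dotv x beta - c)%:E +
  (\int[mu]_(xi in (@coneStar R d : set (BorelRd R d)))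
     ((expR (dotv x xi) - 1 - dotv x xi * (if enorm xi <= 1 then 1 else 0))%R)%:E)%E.

Definition effdom (R : realType) (d : nat) (F : 'I_d -> 'rV[R]_d -> \bar R)
  : set 'rV[R]_d := [set x | forall i, (F i x < +oo)%E].

Definition convex_set_Rd (R : realType) (d : nat) (D : set 'rV[R]_d) : Prop :=
  forall x y (l : R), D x -> D y -> 0 <= l <= 1 -> D (l *: x + (1 - l) *: y).

Definition order_regular (R : realType) (d : nat) (D : set 'rV[R]_d) : Prop :=
  forall x y, D x -> vle y x -> D y.

Definition convex_map_on (R : realType) (d : nat) (F : 'I_d -> 'rV[R]_d -> \bar R)
  (D : set 'rV[R]_d) : Prop :=
  convex_set_Rd D /\
  forall x y (l : R), D x -> D y -> 0 <= l <= 1 -> forall i,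
    (F i (l *: x + (1 - l) *: y)%R <= (l%:E * F i x + (1 - l)%:E * F i y)%E)%E.

Definition quasi_monotone_on (R : realType) (d : nat)
  (F : 'I_d -> 'rV[R]_d -> \bar R) (D : set 'rV[R]_d) : Prop :=
  forall x y, D x -> D y -> vle x y -> forall i, x 0 i = y 0 i -> (F i x <= F i y)%E.

(* The integrand of f_i splits as
     e^{x.xi} - 1 - (x.xi) 1_{|xi|<=1} = A(x, xi) - 1_{|xi|>1},
     A(x, xi) := e^{x.xi} - (1 + x.xi) 1_{|xi|<=1} >= 0.
   Since mu_i({|xi| > 1}) is finite, f_i(x) = q_i(x) + J_i(x) with q_i a convex quadratic
   polynomial and J_i(x) := int A(x, xi) mu_i(dxi) in [0, +oo], so U = {x | J_i(x) < +oo for all i}.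
   A is convex in x, hence so are the J_i, U and f.
   For y <= x and xi in C, A(y, xi) <= A(x, xi) when |xi| > 1, while for |xi| <= 1 the bound
   e^t - 1 - t <= t^2 e^|t| gives A(y, xi) <= 2 |y|_1^2 e^{|y|_1} (sum_{k<>i} |xi_k| + xi_i^2),
   which is mu_i-integrable: U is order-regular.
   For x <= y with x_i = y_i, A(x, xi) <= A(y, xi) + (y - x).xi 1_{|xi|<=1}, and the drift
   condition bounds the integral of the last term by (y - x).beta^i = q_i(y) - q_i(x). *)

From HB Require Import structures.
From mathcomp Require Import all_boot all_order all_algebra.
From mathcomp Require Import all_classical all_reals all_analysis.
From mathcomp Require Import measurable_realfun.
From mathcomp Require Import ring lra.
Import Order.TTheory GRing.Theory Num.Theory.
Import numFieldNormedType.Exports.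
Local Open Scope classical_set_scope.
Local Open Scope ring_scope.
Set Implicit Arguments. Unset Strict Implicit.

Section Geometry.
Variables (R : realType) (d : nat).
Local Notation T := (BorelRd R d).

Definition sqnorm (x : 'rV[R]_d) : R := \sum_(k < d) x 0 k ^+ 2.

Definition unit_ball : set T := [set x | enorm x <= 1].

Definition small_indic (xi : 'rV[R]_d) : R := if enorm xi <= 1 then 1 else 0.

Lemma measurable_coord (k : 'I_d) : measurable_fun [set: T] (fun x : T => x 0 k).
Proof.
apply: (measurability _ (RGenOpens.measurableE R)).
move=> _ [_ [a [b ->] <-]]; apply: sub_sigma_algebra; rewrite setTI.
by move: (@coord_continuous R 1 d 0 k) => /continuousP; apply; exact: interval_open.
Qed.

Lemma measurable_dotv (y : 'rV[R]_d) : measurable_fun [set: T] (fun x : T => dotv y x).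
Proof.
apply: (@measurable_sum _ T R setT _ _ (fun k (x : T) => y 0 k * x 0 k)) => k.
exact: measurable_funM (measurable_coord k).
Qed.

Lemma measurable_sqnorm : measurable_fun [set: T] sqnorm.
Proof.
apply: (@measurable_sum _ T R setT _ _ (fun k (x : T) => x 0 k ^+ 2)) => k.
exact: measurable_funX (measurable_coord k).
Qed.

Lemma measurable_cone : measurable (@cone R d : set T).
Proof.
have -> : (@cone R d : set T) =
    \bigcap_(k in [set: 'I_d]) ((fun x : T => x 0 k) @^-1` `[0, +oo[).
  apply/seteqP; split => x /= Cx k; last by have := Cx k I; rewrite /= in_itv andbT.
  by move=> _; rewrite /= in_itv andbT; exact: Cx.
apply: (@fin_bigcap_measurable _ T _ setT) => [|k _]; first exact: finite_finset.
by rewrite -[X in measurable X]setTI; apply: measurable_coord.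
Qed.

Lemma sqnorm_eq0 (x : 'rV[R]_d) : (sqnorm x == 0) = (x == 0).
Proof.
apply/eqP/eqP => [x0|->]; last by rewrite /sqnorm big1 // => k _; rewrite mxE expr0n.
apply/matrixP => a k; rewrite (ord1 a) mxE.
have /eqP := psumr_eq0P (fun k (_ : true) => sqr_ge0 (x 0 k)) x0 (i := k) erefl.
by rewrite sqrf_eq0 => /eqP.
Qed.

Lemma enorm_le1 (x : 'rV[R]_d) : (enorm x <= 1) = (sqnorm x <= 1).
Proof. by rewrite /enorm -/(sqnorm x) -[in RHS](ler_sqrt _ ler01) sqrtr1. Qed.

Lemma measurable_coneStar : measurable (@coneStar R d : set T).
Proof.
have -> : (@coneStar R d : set T) = (@cone R d : set T) `&` ~` (sqnorm @^-1` [set 0]).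
  apply/seteqP; split => x /= [Cx nx]; split => // x0; apply: nx.
    by apply/eqP; rewrite -sqnorm_eq0 x0.
  by apply/eqP; rewrite sqnorm_eq0 x0.
apply: measurableI; first exact: measurable_cone.
by apply: measurableC; rewrite -[X in measurable X]setTI; apply: measurable_sqnorm.
Qed.

Lemma measurable_unit_ball : measurable unit_ball.
Proof.
have -> : unit_ball = sqnorm @^-1` `]-oo, 1].
  by apply/seteqP; split => x; rewrite /unit_ball /preimage /= in_itv /= enorm_le1.
by rewrite -[X in measurable X]setTI; apply: measurable_sqnorm.
Qed.

Lemma small_indicE : small_indic = \1_unit_ball.
Proof.
apply/funext => x; rewrite indicE /small_indic.
by case: ifPn => h; [rewrite mem_set | rewrite memNset //= => /(negP h)].
Qed.

Lemma measurable_small_indic : measurable_fun [set: T] small_indic.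
Proof. by rewrite small_indicE; exact: measurable_indic measurable_unit_ball. Qed.

Lemma bigJumpsE : (@bigJumps R d : set T) = (@coneStar R d : set T) `&` ~` unit_ball.
Proof.
apply/seteqP; split => x /=; rewrite /bigJumps /coneStar /unit_ball /=.
  move=> [Cx lt1]; split; last by apply/negP; rewrite -ltNge.
  split=> // x0; move: lt1; rewrite x0 /enorm.
  by rewrite big1 => [|k _]; [rewrite sqrtr0 ltr10 | rewrite mxE expr0n].
by move=> [[Cx _] /negP]; rewrite -ltNge.
Qed.

End Geometry.
Arguments unit_ball {R d}.

Lemma expR_convex (R : realType) (a b l : R) : 0 <= l <= 1 ->
  expR (l * a + (1 - l) * b) <= l * expR a + (1 - l) * expR b.
Proof. by move=> /andP[l0 l1]; exact: (convex_expR (Itv01 l0 l1)). Qed.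

Lemma expR_sub1Dx_le (R : realType) (t : R) : expR t - 1 - t <= t ^+ 2 * expR `|t|.
Proof.
have ge1Dx := expR_ge1Dx t.
have le_texp : expR t - 1 <= t * expR t.
  have eN : expR t * expR (- t) = 1 by rewrite -expRD subrr expR0.
  have : expR t * (1 - t) <= expR t * expR (- t) by rewrite ler_pM2l ?expR_gt0 ?expR_ge1Dx.
  rewrite eN; nra.
have [t0|t0] := leP 0 t.
  have : t * (expR t - 1) <= t * (t * expR t) by rewrite ler_wpM2l.
  rewrite ger0_norm //; nra.
have : - t * (1 - expR t) <= - t * - t by apply: ler_wpM2l; lra.
have : t ^+ 2 <= t ^+ 2 * expR `|t|.
  by rewrite ler_peMr ?sqr_ge0 // ltr0_norm //; have := expR_ge1Dx (- t); lra.
nra.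
Qed.

Section Pointwise.
Variables (R : realType) (d : nat).
Implicit Types x y xi : 'rV[R]_d.

Definition cexp x xi : R := expR (dotv x xi) - (1 + dotv x xi) * small_indic xi.

Lemma small_indic_ge0 xi : 0 <= small_indic xi.
Proof. by rewrite /small_indic; case: ifP. Qed.

Lemma cexp_ge0 x xi : 0 <= cexp x xi.
Proof.
rewrite /cexp /small_indic; have := expR_ge1Dx (dotv x xi).
by case: ifP => _; rewrite ?mulr1 ?mulr0 ?subr0 ?subr_ge0 ?expR_ge0.
Qed.

Lemma dotv_conv x y xi (l : R) :
  dotv (l *: x + (1 - l) *: y) xi = l * dotv x xi + (1 - l) * dotv y xi.
Proof.
rewrite /dotv !mulr_sumr -big_split; apply: eq_bigr => k _ /=; rewrite !mxE; ring.
Qed.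

Lemma cexp_convex x y xi (l : R) : 0 <= l <= 1 ->
  cexp (l *: x + (1 - l) *: y) xi <= l * cexp x xi + (1 - l) * cexp y xi.
Proof.
move=> l01; have := expR_convex (dotv x xi) (dotv y xi) l01.
rewrite /cexp dotv_conv; set s := small_indic xi; lra.
Qed.

Lemma dotv_le x y xi : vle x y -> cone xi -> dotv x xi <= dotv y xi.
Proof. by move=> xy Cxi; apply: ler_sum => k _; rewrite ler_wpM2r. Qed.

Lemma cexp_le_drift x y xi : vle x y -> cone xi ->
  cexp x xi <= cexp y xi + \sum_(k < d) (y 0 k - x 0 k) * (xi 0 k * small_indic xi).
Proof.
move=> xy Cxi.
have -> : \sum_(k < d) (y 0 k - x 0 k) * (xi 0 k * small_indic xi) =
    (dotv y xi - dotv x xi) * small_indic xi.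
  by rewrite /dotv -sumrB mulr_suml; apply: eq_bigr => k _; ring.
have : expR (dotv x xi) <= expR (dotv y xi) by rewrite ler_expR dotv_le.
rewrite /cexp; lra.
Qed.

End Pointwise.

Section SmallJumps.
Variables (R : realType) (d : nat) (i : 'I_d).
Implicit Types x y xi : 'rV[R]_d.

Definition l1norm y : R := \sum_(k < d) `|y 0 k|.

Definition small_weight xi : R := (\sum_(k < d | k != i) `|xi 0 k|) + `|xi 0 i| ^+ 2.

Lemma l1norm_ge0 y : 0 <= l1norm y.
Proof. exact: sumr_ge0. Qed.

Lemma small_weight_ge0 xi : 0 <= small_weight xi.
Proof. by rewrite addr_ge0 ?sqr_ge0 ?sumr_ge0. Qed.

Lemma abs_coord_le_l1norm y k : `|y 0 k| <= l1norm y.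
Proof. by rewrite /l1norm (bigD1 k) //= lerDl sumr_ge0. Qed.

Lemma abs_coord_le1 xi k : enorm xi <= 1 -> `|xi 0 k| <= 1.
Proof.
rewrite enorm_le1 => le1.
have : `|xi 0 k| ^+ 2 <= 1.
  apply: le_trans le1; rewrite real_normK ?num_real // /sqnorm (bigD1 k) //= lerDl.
  by apply: sumr_ge0 => j _; exact: sqr_ge0.
have := normr_ge0 (xi 0 k); nra.
Qed.

Lemma dotv_sqr_le y xi : enorm xi <= 1 -> dotv y xi ^+ 2 <= 2 * l1norm y ^+ 2 * small_weight xi.
Proof.
move=> xi1; rewrite /dotv (bigD1 i) //=; set r := \sum_(k < d | k != i) _.
set Y := l1norm y; set S := \sum_(k < d | k != i) `|xi 0 k|.
have Y0 : 0 <= Y := l1norm_ge0 y.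
have S0 : 0 <= S by exact: sumr_ge0.
have r_le : `|r| <= \sum_(k < d | k != i) `|y 0 k| * `|xi 0 k|.
  by apply: le_trans (ler_norm_sum _ _ _) _; apply: ler_sum => k _; rewrite normrM.
have r_leYS : `|r| <= Y * S.
  apply: le_trans r_le _; rewrite mulr_sumr; apply: ler_sum => k _.
  by rewrite ler_wpM2r ?abs_coord_le_l1norm.
have r_leY : `|r| <= Y.
  apply: le_trans r_le _; apply: (@le_trans _ _ (\sum_(k < d | k != i) `|y 0 k|)).
    by apply: ler_sum => k _; rewrite ler_piMr ?abs_coord_le1.
  by rewrite /Y /l1norm [leRHS](bigD1 i) //= lerDr.
have r2 : r ^+ 2 <= Y ^+ 2 * S.
  rewrite -real_normK ?num_real // expr2 (expr2 Y) -mulrA.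
  by apply: ler_pM; rewrite ?normr_ge0.
have a2 : (y 0 i * xi 0 i) ^+ 2 <= Y ^+ 2 * `|xi 0 i| ^+ 2.
  rewrite exprMn -(real_normK (num_real (y 0 i))) -(real_normK (num_real (xi 0 i))).
  by rewrite ler_wpM2r ?sqr_ge0 // ler_pXn2r ?nnegrE ?abs_coord_le_l1norm.
have := sqr_ge0 (y 0 i * xi 0 i - r); rewrite /small_weight -/S; nra.
Qed.

Lemma cexp_le_small_weight x y xi : vle y x -> cone xi ->
  cexp y xi <= cexp x xi + 2 * l1norm y ^+ 2 * expR (l1norm y) * (small_weight xi * small_indic xi).
Proof.
move=> yx Cxi; rewrite /cexp /small_indic; case: ifPn => [xi1|_]; last first.
  by rewrite !mulr0 !subr0 addr0 ler_expR dotv_le.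
rewrite !mulr1; set t := dotv y xi; set Y := l1norm y.
have tY : `|t| <= Y.
  apply: le_trans (ler_norm_sum _ _ _) _; apply: ler_sum => k _.
  by rewrite normrM ler_piMr ?abs_coord_le1.
have : t ^+ 2 * expR `|t| <= 2 * Y ^+ 2 * small_weight xi * expR Y.
  by apply: ler_pM; rewrite ?sqr_ge0 ?expR_ge0 ?dotv_sqr_le // ler_expR.
have := expR_sub1Dx_le t; have := cexp_ge0 x xi; rewrite /cexp /small_indic xi1 mulr1.
lra.
Qed.

End SmallJumps.

Section NonnegIntegral.
Context d' (X : measurableType d') (R : realType) (nu : {measure set X -> \bar R}).
Variables (D : set X) (mD : measurable D).
Local Open Scope ereal_scope.

Lemma ge0_le_integralD (f g h : X -> \bar R) :
  measurable_fun D f -> measurable_fun D g -> measurable_fun D h ->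
  (forall x, D x -> 0 <= f x) -> (forall x, D x -> 0 <= g x) -> (forall x, D x -> 0 <= h x) ->
  (forall x, D x -> f x <= g x + h x) ->
  \int[nu]_(x in D) f x <= \int[nu]_(x in D) g x + \int[nu]_(x in D) h x.
Proof.
move=> mf mg mh f0 g0 h0 fgh; rewrite -ge0_integralD //.
exact: ge0_le_integral (emeasurable_funD mg mh) _.
Qed.

Section IntegrableShift.
Variables (f : X -> \bar R) (h : X -> R).
Hypotheses (mf : measurable_fun D f) (f0 : forall x, D x -> 0 <= f x).
Hypothesis ih : nu.-integrable D (EFin \o h).
Let g x := f x + (h x)%:E.

Let mh : measurable_fun D (EFin \o h) := measurable_int _ ih.
Let mg : measurable_fun D g := emeasurable_funD mf mh.

Lemma shift_funeneg_le x : D x -> g^\- x <= (EFin \o h)^\- x.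
Proof.
move=> Dx; rewrite !funenegE /g /=; case: (f x) (f0 Dx) => [r| _ |//].
  rewrite lee_fin => r0; rewrite -EFinD -!EFinN -!EFin_max lee_fin.
  by rewrite ge_max !le_max lexx orbT andbT; lra.
by rewrite addye //= ge_max leNye /= le_max lexx orbT.
Qed.

Lemma le_shift_funepos x : D x -> f x <= g^\+ x + (EFin \o h)^\- x.
Proof.
move=> Dx; rewrite funeposE funenegE /g /=; case: (f x) (f0 Dx) => [r _| _ |//].
  rewrite -EFinD -!EFin_max -EFinD lee_fin.
  have : (r + h x <= Num.max (r + h x) 0)%R by rewrite le_max lexx.
  have : (- h x <= Num.max (- h x) 0)%R by rewrite le_max lexx.
  lra.
by rewrite addye // -EFin_max.
Qed.

Lemma ge0_integrableD_pinfty : \int[nu]_(x in D) f x = +oo -> \int[nu]_(x in D) g x = +oo.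
Proof.
move=> finf; have hneg_fin := integrable_neg_fin_num mD ih.
have ge0_neg (k : X -> \bar R) : 0 <= \int[nu]_(x in D) k^\- x.
  by apply: integral_ge0 => x _; exact: funeneg_ge0.
have gneg_fin : \int[nu]_(x in D) g^\- x \is a fin_num.
  rewrite ge0_fin_numE //; apply: le_lt_trans (_ : _ <= \int[nu]_(x in D) (EFin \o h)^\- x) _.
    by apply: ge0_le_integral => //; [exact: measurable_funeneg | exact: measurable_funeneg |
      exact: shift_funeneg_le].
  by rewrite -ge0_fin_numE.
have : +oo <= \int[nu]_(x in D) g^\+ x + \int[nu]_(x in D) (EFin \o h)^\- x.
  rewrite -finf; apply: ge0_le_integralD => //; try exact: le_shift_funepos;
    try exact: measurable_funepos; try exact: measurable_funeneg;
    by move=> x _; rewrite ?funepos_ge0 ?funeneg_ge0.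
rewrite -(fineK hneg_fin) => pos_infty; rewrite integralE -(fineK gneg_fin).
by move: pos_infty; case: (\int[nu]_(x in D) g^\+ x).
Qed.

Lemma ge0_integrableD :
  \int[nu]_(x in D) (f x + (h x)%:E) = \int[nu]_(x in D) f x + \int[nu]_(x in D) (h x)%:E.
Proof.
have [fint|] := ltP (\int[nu]_(x in D) f x) +oo.
  apply: integralD => //; apply/integrableP; split => //.
  by rewrite (eq_integral f) // => x /[!inE] Dx; rewrite gee0_abs ?f0.
rewrite leye_eq => /eqP finf; rewrite ge0_integrableD_pinfty // finf addye //.
by move: (integrable_fin_num mD ih); rewrite fin_numE => /andP[].
Qed.

End IntegrableShift.

End NonnegIntegral.

Section CompensatedIntegral.
Variables (R : realType) (d : nat) (mu : {measure set BorelRd R d -> \bar R}).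
Local Notation T := (BorelRd R d).
Local Notation D := (@coneStar R d : set T).
Let mD : measurable D := @measurable_coneStar R d.
Local Open Scope ereal_scope.

Definition cexp_integral (x : 'rV[R]_d) : \bar R := \int[mu]_(xi in D) (cexp x xi)%:E.

Lemma measurable_EFin_coneStar (F : T -> R) :
  measurable_fun [set: T] F -> measurable_fun D (EFin \o F).
Proof. by move=> mF; apply/measurable_EFinP; exact: measurable_funTS. Qed.

Lemma measurable_cexp x : measurable_fun [set: T] (cexp x).
Proof.
apply: measurable_funB; first exact: measurableT_comp (measurable_dotv x).
apply: measurable_funM; last exact: measurable_small_indic.
exact: measurable_funD (measurable_dotv x).
Qed.

Lemma measurable_EFin_cexp x : measurable_fun D (fun xi => (cexp x xi)%:E).
Proof. exact: measurable_EFin_coneStar (measurable_cexp x). Qed.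

Lemma cexp_integral_ge0 x : 0 <= cexp_integral x.
Proof. by apply: integral_ge0 => xi _; rewrite lee_fin cexp_ge0. Qed.

Lemma cexp_integral_convex x y (l : R) : (0 <= l <= 1)%R ->
  cexp_integral (l *: x + (1 - l) *: y) <= l%:E * cexp_integral x + (1 - l)%:E * cexp_integral y.
Proof.
move=> /[dup] l01 /andP[l0 l1]; have l0' : (0 <= 1 - l)%R by rewrite subr_ge0.
have cexp0 z xi : D xi -> 0 <= (cexp z xi)%:E by rewrite lee_fin cexp_ge0.
rewrite /cexp_integral -!ge0_integralZl_EFin //;
  try (exact: cexp0); try (exact: measurable_EFin_cexp).
refine (ge0_le_integralD mu mD (measurable_EFin_cexp _)
  (measurable_funeM l%:E (measurable_EFin_cexp x))
  (measurable_funeM (1 - l)%:E (measurable_EFin_cexp y)) _ _ _ _).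
- exact: cexp0.
- by move=> xi Dxi; rewrite mule_ge0 ?cexp0.
- by move=> xi Dxi; rewrite mule_ge0 ?cexp0.
- by move=> xi _; rewrite -!EFinM -EFinD lee_fin cexp_convex.
Qed.

Lemma measurable_small_weight (i : 'I_d) : measurable_fun [set: T] (small_weight i).
Proof.
have mabs k : measurable_fun [set: T] (fun xi : T => `|xi 0 k|%R).
  exact: measurableT_comp (measurable_coord k).
apply: measurable_funD; last exact: measurable_funX (mabs i).
rewrite (_ : (fun xi => _) = (fun xi : T => \sum_(k < d) (if k != i then `|xi 0 k| else 0))%R).
  apply: (@measurable_sum _ T R setT _ _ (fun k (xi : T) => if k != i then `|xi 0 k| else 0)%R).
  by move=> k; case: (k != i); [exact: mabs | exact: measurable_cst].
by apply/funext => xi; rewrite big_mkcond.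
Qed.

Lemma integral_smallJumps (F : 'rV[R]_d -> R) :
  \int[mu]_(xi in (@smallJumps R d : set T)) (F xi)%:E =
  \int[mu]_(xi in D) (F xi * small_indic xi)%:E.
Proof.
rewrite (_ : (@smallJumps R d : set T) = D `&` unit_ball) // integral_mkcondr.
apply: eq_integral => xi _; rewrite small_indicE /patch indicE.
by case: ifPn; rewrite ?mulr1 ?mulr0.
Qed.

Lemma cexp_integral_le_small_weight (i : 'I_d) x y : vle y x ->
  cexp_integral y <= cexp_integral x + (2 * l1norm y ^+ 2 * expR (l1norm y))%:E *
    \int[mu]_(xi in (@smallJumps R d : set T)) (small_weight i xi)%:E.
Proof.
move=> yx; set K := (2 * l1norm y ^+ 2 * expR (l1norm y))%R.
have K0 : (0 <= K)%R by apply/mulr_ge0/expR_ge0/mulr_ge0/sqr_ge0.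
have w0 xi : D xi -> 0 <= (small_weight i xi * small_indic xi)%:E.
  by rewrite lee_fin mulr_ge0 ?small_weight_ge0 ?small_indic_ge0.
have mw : measurable_fun D (fun xi => (small_weight i xi * small_indic xi)%:E).
  apply: measurable_EFin_coneStar.
  by apply: measurable_funM; [exact: measurable_small_weight | exact: measurable_small_indic].
rewrite integral_smallJumps -ge0_integralZl_EFin //.
refine (ge0_le_integralD mu mD (measurable_EFin_cexp y) (measurable_EFin_cexp x)
  (measurable_funeM K%:E mw) _ _ _ _).
- by move=> xi _; rewrite lee_fin cexp_ge0.
- by move=> xi _; rewrite lee_fin cexp_ge0.
- by move=> xi Dxi; rewrite mule_ge0 ?w0.
- by move=> xi [Cxi _]; rewrite -EFinM -EFinD lee_fin cexp_le_small_weight.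
Qed.

Lemma cexp_integral_le_drift x y : vle x y ->
  cexp_integral x <= cexp_integral y +
    \sum_(k < d) (y 0 k - x 0 k)%:E * \int[mu]_(xi in (@smallJumps R d : set T)) (xi 0 k)%:E.
Proof.
move=> xy; pose G k (xi : 'rV[R]_d) := ((y 0 k - x 0 k) * (xi 0 k * small_indic xi))%R.
have G0 k xi : D xi -> 0 <= (G k xi)%:E.
  by move=> [Cxi _]; rewrite lee_fin !mulr_ge0 ?small_indic_ge0 ?Cxi // subr_ge0.
have mG k : measurable_fun D (fun xi => (G k xi)%:E).
  apply: measurable_EFin_coneStar; apply: measurable_funM => //.
  by apply: measurable_funM; [exact: measurable_coord | exact: measurable_small_indic].
have -> : \sum_(k < d) (y 0 k - x 0 k)%:E * \int[mu]_(xi in (@smallJumps R d : set T)) (xi 0 k)%:E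
    = \int[mu]_(xi in D) \sum_(k < d) (G k xi)%:E.
  rewrite ge0_integral_sum //; apply: eq_bigr => k _.
  rewrite integral_smallJumps -ge0_integralZl_EFin ?subr_ge0 //.
    by move=> xi [Cxi _]; rewrite lee_fin mulr_ge0 ?small_indic_ge0 ?Cxi.
  apply: measurable_EFin_coneStar.
  by apply: measurable_funM; [exact: measurable_coord | exact: measurable_small_indic].
refine (ge0_le_integralD mu mD (measurable_EFin_cexp x) (measurable_EFin_cexp y)
  (emeasurable_sum _ mG) _ _ _ _).
- by move=> xi _; rewrite lee_fin cexp_ge0.
- by move=> xi _; rewrite lee_fin cexp_ge0.
- by move=> xi Dxi; apply: sume_ge0 => k _; exact: G0.
- by move=> xi [Cxi _]; rewrite sumEFin -EFinD lee_fin cexp_le_drift.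
Qed.

Lemma small_indicB1E (xi : T) : (small_indic xi - 1)%R%:E = - (\1_(~` (@unit_ball R d)) xi)%:E.
Proof.
by rewrite small_indicE !indicE in_setC; case: (xi \in _); rewrite /= ?subrr ?oppr0 ?sub0r.
Qed.

Lemma integral_indic_not_unit_ball :
  \int[mu]_(xi in D) (\1_(~` (@unit_ball R d)) xi)%:E = mu (@bigJumps R d : set T).
Proof.
rewrite integral_indic //; first by rewrite setIC bigJumpsE.
by apply: measurableC; exact: measurable_unit_ball.
Qed.

Lemma integral_small_indicB1 :
  \int[mu]_(xi in D) (small_indic xi - 1)%:E = - mu (@bigJumps R d : set T).
Proof.
under eq_integral do rewrite small_indicB1E.
by rewrite integral_ge0N ?integral_indic_not_unit_ball // => xi _; rewrite lee_fin.
Qed.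

Lemma integrable_small_indicB1 : mu (@bigJumps R d : set T) < +oo ->
  mu.-integrable D (EFin \o (fun xi => small_indic xi - 1)%R).
Proof.
move=> hbig; apply/integrableP; split.
  apply: measurable_EFin_coneStar.
  by apply: measurable_funB; [exact: measurable_small_indic | exact: measurable_cst].
rewrite (eq_integral (fun xi => (\1_(~` (@unit_ball R d)) xi)%:E)).
  by rewrite integral_indic_not_unit_ball.
move=> xi _; rewrite /= small_indicE !indicE in_setC.
by case: (xi \in _); rewrite /= ?subrr ?sub0r ?normrN ?normr1 ?normr0.
Qed.

End CompensatedIntegral.

Section EffectiveDomain.
Variables (R : realType) (d : nat) (mu : {measure set BorelRd R d -> \bar R}).
Local Notation J := (cexp_integral mu).
Local Open Scope ereal_scope.

Lemma cexp_integral_lty_convex x y (l : R) : (0 <= l <= 1)%R ->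
  J x < +oo -> J y < +oo -> J (l *: x + (1 - l) *: y)%R < +oo.
Proof.
move=> /[dup] l01 /andP[l0 l1] Jx Jy; apply: le_lt_trans (cexp_integral_convex mu x y l01) _.
by rewrite lte_add_pinfty // lte_mul_pinfty ?lee_fin ?subr_ge0.
Qed.

Lemma cexp_integral_lty_le (i : 'I_d) x y :
  \int[mu]_(xi in (@smallJumps R d : set (BorelRd R d))) (small_weight i xi)%:E < +oo ->
  J x < +oo -> vle y x -> J y < +oo.
Proof.
move=> hsmall Jx yx; apply: le_lt_trans (cexp_integral_le_small_weight mu i yx) _.
rewrite lte_add_pinfty // lte_mul_pinfty // lee_fin.
by apply/mulr_ge0/expR_ge0/mulr_ge0/sqr_ge0.
Qed.

End EffectiveDomain.

Section Component.
Variables (R : realType) (d : nat) (alpha c : R) (beta : 'rV[R]_d).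
Variables (mu : {measure set BorelRd R d -> \bar R}) (i : 'I_d).
Local Notation T := (BorelRd R d).
Hypotheses (alpha0 : 0 <= alpha) (mu_big : (mu (@bigJumps R d : set T) < +oo)%E).
Local Notation f := (fcomp alpha c beta mu i).
Local Notation J := (cexp_integral mu).

Definition fcomp_poly (x : 'rV[R]_d) : R :=
  alpha / 2 * x 0 i ^+ 2 + dotv x beta - c - fine (mu (@bigJumps R d : set T)).

Lemma fcompE x : f x = ((fcomp_poly x)%:E + J x)%E.
Proof.
have big_fin : mu (@bigJumps R d : set T) \is a fin_num.
  by rewrite ge0_fin_numE ?measure_ge0.
rewrite /fcomp (eq_integral (fun xi : T => (cexp x xi)%:E + (small_indic xi - 1)%:E)%E); last first.
  by move=> xi _; rewrite -EFinD /cexp /small_indic; congr EFin; case: ifP => _; ring.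
rewrite ge0_integrableD //; last exact: integrable_small_indicB1.
- rewrite integral_small_indicB1 -(fineK big_fin) /fcomp_poly.
  by rewrite [in RHS]EFinB addeA [RHS]addeAC.
- exact: measurable_coneStar.
- exact: measurable_EFin_cexp.
- by move=> xi _; rewrite lee_fin cexp_ge0.
Qed.

Lemma fcomp_lty x : (f x < +oo)%E = (J x < +oo)%E.
Proof. by rewrite fcompE; case: (J x) => [r||] //; rewrite -EFinD !ltry. Qed.

Lemma fcomp_poly_convex x y (l : R) : 0 <= l <= 1 ->
  fcomp_poly (l *: x + (1 - l) *: y) <= l * fcomp_poly x + (1 - l) * fcomp_poly y.
Proof.
move=> /andP[l0 l1]; rewrite /fcomp_poly dotv_conv !mxE.
have : 0 <= alpha / 2 * (l * (1 - l)) * (x 0 i - y 0 i) ^+ 2.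
  by rewrite mulr_ge0 ?sqr_ge0 // !mulr_ge0 ?divr_ge0 // subr_ge0.
nra.
Qed.

Lemma cexp_integral_fineK x : (J x < +oo)%E -> J x = (fine (J x))%:E.
Proof. by move=> Jx; rewrite fineK // ge0_fin_numE ?cexp_integral_ge0. Qed.

Lemma fcomp_convex x y (l : R) : 0 <= l <= 1 -> (J x < +oo)%E -> (J y < +oo)%E ->
  (f (l *: x + (1 - l) *: y) <= l%:E * f x + (1 - l)%:E * f y)%E.
Proof.
move=> l01 Jx Jy; have Jz := cexp_integral_lty_convex l01 Jx Jy.
have := cexp_integral_convex mu x y l01; have := fcomp_poly_convex x y l01.
rewrite !fcompE (cexp_integral_fineK Jx) (cexp_integral_fineK Jy) (cexp_integral_fineK Jz).
rewrite -!EFinD !lee_fin; lra.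
Qed.

Lemma fcomp_quasi_monotone x y :
  (forall k, k != i -> (0 <= (beta 0 k)%:E -
     \int[mu]_(xi in (@smallJumps R d : set T)) (xi 0 k)%:E)%E) ->
  vle x y -> x 0 i = y 0 i -> (f x <= f y)%E.
Proof.
move=> drift xy xyi.
pose I k := (\int[mu]_(xi in (@smallJumps R d : set T)) (xi 0 k)%:E)%E.
have drift_le : (\sum_(k < d) (y 0 k - x 0 k)%:E * I k <=
    (\sum_(k < d) (y 0 k - x 0 k) * beta 0 k)%:E)%E.
  rewrite -sumEFin; apply: lee_sum => k _.
  have [->|ki] := eqVneq k i; first by rewrite xyi subrr mul0e mul0r.
  have I0 : (0 <= I k)%E.
    by apply: integral_ge0 => xi [[Cxi _] _]; rewrite lee_fin Cxi.
  rewrite EFinM lee_pmul ?lee_fin ?subr_ge0 //.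
  by rewrite -sube_ge0 ?drift // fin_numE /= orbT.
have poly_shift : fcomp_poly y = fcomp_poly x + \sum_(k < d) (y 0 k - x 0 k) * beta 0 k.
  rewrite /fcomp_poly xyi /dotv.
  have -> : \sum_(k < d) (y 0 k - x 0 k) * beta 0 k =
      \sum_(k < d) y 0 k * beta 0 k - \sum_(k < d) x 0 k * beta 0 k.
    by rewrite -sumrB; apply: eq_bigr => k _; ring.
  ring.
rewrite !fcompE poly_shift [in leRHS]EFinD -addeA leeD2lE // addeC.
exact: le_trans (cexp_integral_le_drift mu xy) (leeD2l _ drift_le).
Qed.

End Component.

Unset Implicit Arguments. Set Strict Implicit.

Theorem mainTheorem6 (R : realType) (d : nat) (hd : (1 <= d)%N)
  (alpha c : 'I_d -> R) (beta : 'I_d -> 'rV[R]_d)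
  (mu : 'I_d -> {measure set (BorelRd R d) -> \bar R})
  (halpha : forall i, 0 <= alpha i) (hc : forall i, 0 <= c i)
  (* mu_i is a Borel measure on C \ {0}: it is carried by C \ {0} *)
  (hsupp : forall i, mu i (~` (@coneStar R d : set (BorelRd R d))) = 0%E)
  (hbig : forall i, (mu i (@bigJumps R d : set (BorelRd R d)) < +oo)%E)
  (hsmall : forall i,
     (\int[mu i]_(xi in (@smallJumps R d : set (BorelRd R d)))
        ((\sum_(k < d | k != i) `|xi 0 k|) + `|xi 0 i| ^+ 2)%:E < +oo)%E)
  (hdrift : forall i (k : 'I_d), k != i ->
     (0 <= (beta i 0 k)%:E
        - \int[mu i]_(xi in (@smallJumps R d : set (BorelRd R d))) (xi 0 k)%:E)%E) :
  let f := fun i => fcomp (alpha i) (c i) (beta i) (mu i) i in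
  let U := effdom f in
  convex_set_Rd U /\ order_regular U /\ convex_map_on f U /\ quasi_monotone_on f U.
Proof.
move=> f U.
have UE x : U x <-> forall i, (cexp_integral (mu i) x < +oo)%E.
  by rewrite /U /effdom; split=> Ux i; have := Ux i; rewrite /f fcomp_lty //; exact: hbig.
have U_convex : convex_set_Rd U.
  by move=> x y l /UE Ux /UE Uy l01; apply/UE => i; exact: cexp_integral_lty_convex.
split=> //; split.
  by move=> x y /UE Ux yx; apply/UE => i; exact: cexp_integral_lty_le (hsmall i) (Ux i) yx.
split; first by split=> // x y l /UE Ux /UE Uy l01 i; exact: fcomp_convex.
by move=> x y _ _ xy i xyi; exact: fcomp_quasi_monotone (hdrift i) xy xyi.
Qed.
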